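(* Let $(\mathcal C,\otimes,\mathbb I)$ be a monoidal category with pushouts and $(H,\Delta,\varepsilon)$ a coalgebra in $\mathcal C$. The induction construction defines a functor $\mathsf{Ind}:\mathsf{Cov}^H\to\mathsf{PCom}^H$: on objects, $\mathsf{Ind}(Y,X,p)$ is the partial comodule induced from $Y$ to $X$ via $p$; on morphisms, for $(F,f):(Y,X,p)\to(Y',X',p')$ in $\mathsf{Cov}^H$ there is a unique morphism $f\bullet H:X\bullet H\to X'\bullet H$ with $(f\bullet H)\circ\rho_X=\rho_{X'}\circ f$ and $(f\bullet H)\circ\pi_X=\pi_{X'}\circ(f\otimes H)$, and $\mathsf{Ind}(F,f)=(f,f\bullet H)$ is a morphism of geometric partial comodules.
   Context: $\mathcal C$ is treated as strict monoidal; the identity of an object $X$ is also written $X$. $\mathsf{Com}^H$ is the category of right $H$-comodules $(Y,\delta)$. A partial comodule datum is $(X,X\bullet H,\pi_X,\rho_X)$ with $\rho_X:X\to X\bullet H$ and $\pi_X:X\otimes H\to X\bullet H$ an epimorphism. For such a datum let: $(X\bullet H)\bullet H$ be the pushout of $\pi_X$ and $\rho_X\otimes H$, with coprojections $\rho_X\bullet H$ and $\pi_{X\bullet H}$; $X\bullet(H\otimes H)$ the pushout of $\pi_X$ and $X\otimes\Delta$, with coprojections $X\bullet\Delta$ and $\pi_{X,\Delta}$; $X\bullet(H\bullet H)$ the pushout of $\pi_{X,\Delta}$ and $\pi_X\otimes H$, with coprojections $\pi'_X$ and $\pi'_{X,\Delta}$. A geometric partial $H$-comodule is a datum such that (GP1)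 there is $X\bullet\varepsilon:X\bullet H\to X$ with $(X\bullet\varepsilon)\circ\rho_X=\mathrm{id}_X$ and $(X\bullet\varepsilon)\circ\pi_X=X\otimes\varepsilon$; (GP2) there is an isomorphism $\theta:X\bullet(H\bullet H)\to(X\bullet H)\bullet H$ with $\theta\circ\pi'_{X,\Delta}=\pi_{X\bullet H}$ and $(\rho_X\bullet H)\circ\rho_X=\theta\circ\pi'_X\circ(X\bullet\Delta)\circ\rho_X$. Morphisms $X\to X'$ are pairs $(f,f\bullet H)$ with $\rho_{X'}\circ f=(f\bullet H)\circ\rho_X$ and $\pi_{X'}\circ(f\otimes H)=(f\bullet H)\circ\pi_X$; category $\mathsf{PCom}^H$. Induction: given $(Y,\delta)\in\mathsf{Com}^H$ and an epimorphism $p:Y\to X$ in $\mathcal C$, let $X\bullet H$ with coprojections $\rho_X:X\to X\bullet H$ and $\pi_X:X\otimes H\to X\bullet H$ be the pushout of $p$ and $(p\otimes H)\circ\delta$; it is known that $(X,X\bullet H,\pi_X,\rho_X)$ is a geometric partial comodule (the induced one). $\mathsf{Cov}^H$ has objects $(Y,X,p)$ with $Y\in\mathsf{Com}^H$, $X\in\mathcal C$, $p:Y\to X$ an epimorphism in $\mathcal C$; morphisms $(F,f):(Y,X,p)\to(Y',X',p')$ consist of a comodule morphism $F:Y\to Y'$ and a morphism $f:X\to X'$ in $\mathcal C$ with $p'\circ F=f\circ p$. *)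

Set Implicit Arguments.
Unset Strict Implicit.

Record MonCat := {
  Ob : Type;
  Hom : Ob -> Ob -> Type;
  idm : forall X, Hom X X;
  comp : forall X Y Z, Hom Y Z -> Hom X Y -> Hom X Z;
  comp_assoc : forall X Y Z W (h : Hom Z W) (g : Hom Y Z) (f : Hom X Y),
      comp h (comp g f) = comp (comp h g) f;
  comp_id_l : forall X Y (f : Hom X Y), comp (idm Y) f = f;
  comp_id_r : forall X Y (f : Hom X Y), comp f (idm X) = f;
  tens : Ob -> Ob -> Ob;
  unitO : Ob;
  tensm : forall X X' Y Y', Hom X X' -> Hom Y Y' -> Hom (tens X Y) (tens X' Y');
  tensm_id : forall X Y, tensm (idm X) (idm Y) = idm (tens X Y);
  tensm_comp : forall X X' X'' Y Y' Y'' (f : Hom X X') (f' : Hom X' X'')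
      (g : Hom Y Y') (g' : Hom Y' Y''),
      tensm (comp f' f) (comp g' g) = comp (tensm f' g') (tensm f g);
  assoc : forall X Y Z, Hom (tens (tens X Y) Z) (tens X (tens Y Z));
  assoc_inv : forall X Y Z, Hom (tens X (tens Y Z)) (tens (tens X Y) Z);
  assoc_iso1 : forall X Y Z, comp (assoc_inv X Y Z) (assoc X Y Z) = idm _;
  assoc_iso2 : forall X Y Z, comp (assoc X Y Z) (assoc_inv X Y Z) = idm _;
  assoc_nat : forall X X' Y Y' Z Z' (f : Hom X X') (g : Hom Y Y') (h : Hom Z Z'),
      comp (assoc X' Y' Z') (tensm (tensm f g) h)
      = comp (tensm f (tensm g h)) (assoc X Y Z);
  lun : forall X, Hom (tens unitO X) X;
  lun_inv : forall X, Hom X (tens unitO X);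
  lun_iso1 : forall X, comp (lun_inv X) (lun X) = idm _;
  lun_iso2 : forall X, comp (lun X) (lun_inv X) = idm _;
  lun_nat : forall X X' (f : Hom X X'),
      comp (lun X') (tensm (idm unitO) f) = comp f (lun X);
  run : forall X, Hom (tens X unitO) X;
  run_inv : forall X, Hom X (tens X unitO);
  run_iso1 : forall X, comp (run_inv X) (run X) = idm _;
  run_iso2 : forall X, comp (run X) (run_inv X) = idm _;
  run_nat : forall X X' (f : Hom X X'),
      comp (run X') (tensm f (idm unitO)) = comp f (run X);
  pentagon : forall W X Y Z,
      comp (assoc W X (tens Y Z)) (assoc (tens W X) Y Z)
      = comp (tensm (idm W) (assoc X Y Z))
          (comp (assoc W (tens X Y) Z) (tensm (assoc W X Y) (idm Z)));
  triangle : forall X Y,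
      comp (tensm (idm X) (lun Y)) (assoc X unitO Y) = tensm (run X) (idm Y)
}.

Arguments Hom {C} _ _ : rename.
Arguments idm {C} X : rename.
Arguments comp {C X Y Z} _ _ : rename.
Arguments tens {C} _ _ : rename.
Arguments tensm {C X X' Y Y'} _ _ : rename.
Arguments assoc {C} X Y Z : rename.
Arguments run {C} X : rename.
Arguments lun {C} X : rename.
Arguments unitO {C} : rename.

Record Pushouts (C : MonCat) := {
  po_obj : forall A B D, Hom A B -> Hom A D -> Ob C;
  po_inl : forall A B D (f : Hom A B) (g : Hom A D), Hom B (po_obj f g);
  po_inr : forall A B D (f : Hom A B) (g : Hom A D), Hom D (po_obj f g);
  po_comm : forall A B D (f : Hom A B) (g : Hom A D),
      comp (po_inl f g) f = comp (po_inr f g) g;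
  po_desc : forall A B D (f : Hom A B) (g : Hom A D) Q,
      Hom B Q -> Hom D Q -> Hom (po_obj f g) Q;
  po_desc_l : forall A B D (f : Hom A B) (g : Hom A D) Q
      (u : Hom B Q) (v : Hom D Q),
      comp u f = comp v g -> comp (po_desc f g u v) (po_inl f g) = u;
  po_desc_r : forall A B D (f : Hom A B) (g : Hom A D) Q
      (u : Hom B Q) (v : Hom D Q),
      comp u f = comp v g -> comp (po_desc f g u v) (po_inr f g) = v;
  po_uniq : forall A B D (f : Hom A B) (g : Hom A D) Q
      (h h' : Hom (po_obj f g) Q),
      comp h (po_inl f g) = comp h' (po_inl f g) ->
      comp h (po_inr f g) = comp h' (po_inr f g) -> h = h'
}.

Arguments po_obj {C} P {A B D} f g : rename.
Arguments po_inl {C} P {A B D} f g : rename.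
Arguments po_inr {C} P {A B D} f g : rename.
Arguments po_desc {C} P {A B D} f g {Q} u v : rename.

Definition is_epi (C : MonCat) (X Y : Ob C) (p : Hom X Y) : Prop :=
  forall Z (u v : Hom Y Z), comp u p = comp v p -> u = v.

Record Coalgebra (C : MonCat) := {
  coH : Ob C;
  coDelta : Hom coH (tens coH coH);
  coEps : Hom coH unitO;
  co_coassoc : comp (assoc coH coH coH) (comp (tensm coDelta (idm coH)) coDelta)
               = comp (tensm (idm coH) coDelta) coDelta;
  co_counit_l : comp (lun coH) (comp (tensm coEps (idm coH)) coDelta) = idm coH;
  co_counit_r : comp (run coH) (comp (tensm (idm coH) coEps) coDelta) = idm coH
}.

Arguments coH {C} h : rename.
Arguments coDelta {C} h : rename.
Arguments coEps {C} h : rename.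

Section Comod.
Variables (C : MonCat) (P : Pushouts C) (H : Coalgebra C).

Definition is_comodule (Y : Ob C) (delta : Hom Y (tens Y (coH H))) : Prop :=
  comp (assoc Y (coH H) (coH H)) (comp (tensm delta (idm (coH H))) delta)
    = comp (tensm (idm Y) (coDelta H)) delta
  /\ comp (run Y) (comp (tensm (idm Y) (coEps H)) delta) = idm Y.

Definition is_comodule_hom (Y Y' : Ob C) (delta : Hom Y (tens Y (coH H)))
  (delta' : Hom Y' (tens Y' (coH H))) (F : Hom Y Y') : Prop :=
  comp delta' F = comp (tensm F (idm (coH H))) delta.

Record CovObj := {
  cov_Y : Ob C;
  cov_delta : Hom cov_Y (tens cov_Y (coH H));
  cov_comod : is_comodule cov_delta;
  cov_X : Ob C;
  cov_p : Hom cov_Y cov_X;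
  cov_p_epi : is_epi cov_p
}.

Definition is_cov_hom (c c' : CovObj) (F : Hom (cov_Y c) (cov_Y c'))
  (f : Hom (cov_X c) (cov_X c')) : Prop :=
  is_comodule_hom (cov_delta c) (cov_delta c') F
  /\ comp (cov_p c') F = comp f (cov_p c).

Definition ind_XH (c : CovObj) : Ob C :=
  po_obj P (cov_p c) (comp (tensm (cov_p c) (idm (coH H))) (cov_delta c)).
Definition ind_rho (c : CovObj) : Hom (cov_X c) (ind_XH c) :=
  po_inl P (cov_p c) (comp (tensm (cov_p c) (idm (coH H))) (cov_delta c)).
Definition ind_pi (c : CovObj) : Hom (tens (cov_X c) (coH H)) (ind_XH c) :=
  po_inr P (cov_p c) (comp (tensm (cov_p c) (idm (coH H))) (cov_delta c)).

Definition is_pcom_hom (X X' XH XH' : Ob C)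
  (rho : Hom X XH) (pi : Hom (tens X (coH H)) XH)
  (rho' : Hom X' XH') (pi' : Hom (tens X' (coH H)) XH')
  (f : Hom X X') (fH : Hom XH XH') : Prop :=
  comp rho' f = comp fH rho /\ comp pi' (tensm f (idm (coH H))) = comp fH pi.

Definition ind_hom (c c' : CovObj) (f : Hom (cov_X c) (cov_X c')) :
  Hom (ind_XH c) (ind_XH c') :=
  po_desc P (cov_p c) (comp (tensm (cov_p c) (idm (coH H))) (cov_delta c))
    (comp (ind_rho c') f) (comp (ind_pi c') (tensm f (idm (coH H)))).

End Comod.

Arguments is_cov_hom {C H} c c' F f.
Arguments ind_hom {C} P {H} c c' f.

(* X.H is a pushout, so a morphism out of it is determined by its composites
   with rho_X and pi_X.  Hence there is at most one f.H compatible with f, and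
   the pushout's mediating morphism is one as soon as the cocone condition
   holds, which follows from p' F = f p and F being a comodule morphism.
   Functoriality then follows from uniqueness, since identities and composites
   of compatible pairs are compatible.  Finally pi_X is epi because it is the
   pushout of the epimorphism p. *)

Set Implicit Arguments.
Unset Strict Implicit.

Lemma po_inr_epi (C : MonCat) (P : Pushouts C) (A B D : Ob C)
  (f : Hom A B) (g : Hom A D) :
  is_epi f -> is_epi (po_inr P f g).
Proof.
  intros f_epi Z u v Euv.
  apply po_uniq; [|exact Euv].
  apply f_epi.
  rewrite <- !comp_assoc, (po_comm P f g), !comp_assoc, Euv.
  reflexivity.
Qed.

Section Induction.
Variables (C : MonCat) (P : Pushouts C) (H : Coalgebra C).

Lemma cov_hom_id (c : CovObj H) : is_cov_hom c c (idm _) (idm _).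
Proof.
  split.
  - unfold is_comodule_hom. rewrite tensm_id, comp_id_l, comp_id_r. reflexivity.
  - rewrite comp_id_l, comp_id_r. reflexivity.
Qed.

Lemma cov_hom_comp (c c' c'' : CovObj H) F f F' f' :
  is_cov_hom c c' F f -> is_cov_hom c' c'' F' f' ->
  is_cov_hom c c'' (comp F' F) (comp f' f).
Proof.
  unfold is_cov_hom, is_comodule_hom.
  intros [dF pF] [dF' pF']; split.
  - rewrite comp_assoc, dF', <- comp_assoc, dF, comp_assoc, <- tensm_comp, comp_id_l.
    reflexivity.
  - rewrite comp_assoc, pF', <- comp_assoc, pF, comp_assoc. reflexivity.
Qed.

Lemma pcom_hom_id (X XH : Ob C) (rho : Hom X XH) (pi : Hom (tens X (coH H)) XH) :
  is_pcom_hom rho pi rho pi (idm X) (idm XH).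
Proof.
  split.
  - rewrite comp_id_l, comp_id_r. reflexivity.
  - rewrite tensm_id, comp_id_l, comp_id_r. reflexivity.
Qed.

Lemma pcom_hom_comp (X X' X'' XH XH' XH'' : Ob C)
  (rho : Hom X XH) (pi : Hom (tens X (coH H)) XH)
  (rho' : Hom X' XH') (pi' : Hom (tens X' (coH H)) XH')
  (rho'' : Hom X'' XH'') (pi'' : Hom (tens X'' (coH H)) XH'')
  f fH f' fH' :
  is_pcom_hom rho pi rho' pi' f fH -> is_pcom_hom rho' pi' rho'' pi'' f' fH' ->
  is_pcom_hom rho pi rho'' pi'' (comp f' f) (comp fH' fH).
Proof.
  intros [rf pf] [rf' pf']; split.
  - rewrite comp_assoc, rf', <- !comp_assoc, rf. reflexivity.
  - rewrite <- (comp_id_l (idm (coH H))), tensm_comp, comp_assoc, pf',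
      <- !comp_assoc, pf.
    reflexivity.
Qed.

Lemma ind_pi_epi (c : CovObj H) : is_epi (ind_pi P c).
Proof. apply po_inr_epi, cov_p_epi. Qed.

Lemma ind_rho_p (c : CovObj H) :
  comp (ind_rho P c) (cov_p c)
  = comp (ind_pi P c) (comp (tensm (cov_p c) (idm (coH H))) (cov_delta c)).
Proof. apply po_comm. Qed.

Lemma ind_cocone (c c' : CovObj H) F f : is_cov_hom c c' F f ->
  comp (comp (ind_rho P c') f) (cov_p c)
  = comp (comp (ind_pi P c') (tensm f (idm (coH H))))
      (comp (tensm (cov_p c) (idm (coH H))) (cov_delta c)).
Proof.
  intros [dF pF].
  rewrite <- comp_assoc, <- pF, comp_assoc, ind_rho_p, <- !comp_assoc.
  f_equal.
  unfold is_comodule_hom in dF.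
  rewrite dF, !comp_assoc, <- !tensm_comp, pF, comp_id_l.
  reflexivity.
Qed.

Lemma ind_hom_pcom_hom (c c' : CovObj H) F f : is_cov_hom c c' F f ->
  is_pcom_hom (ind_rho P c) (ind_pi P c) (ind_rho P c') (ind_pi P c')
    f (ind_hom P c c' f).
Proof.
  intro cov_Ff; split; symmetry.
  - apply po_desc_l, (ind_cocone cov_Ff).
  - apply po_desc_r, (ind_cocone cov_Ff).
Qed.

Lemma ind_pcom_hom_unique (c : CovObj H) (X' XH' : Ob C)
  (rho' : Hom X' XH') (pi' : Hom (tens X' (coH H)) XH') f
  (g g' : Hom (ind_XH P c) XH') :
  is_pcom_hom (ind_rho P c) (ind_pi P c) rho' pi' f g ->
  is_pcom_hom (ind_rho P c) (ind_pi P c) rho' pi' f g' -> g = g'.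
Proof.
  intros [rg pg] [rg' pg'].
  apply po_uniq.
  - change (comp g (ind_rho P c) = comp g' (ind_rho P c)). rewrite <- rg, rg'. reflexivity.
  - change (comp g (ind_pi P c) = comp g' (ind_pi P c)). rewrite <- pg, pg'. reflexivity.
Qed.

End Induction.

Theorem proposition2p8 (C : MonCat) (P : Pushouts C) (H : Coalgebra C) :
  (* Ind(Y,X,p) is a partial comodule datum: pi_X is an epimorphism *)
  (forall c : CovObj H, is_epi (ind_pi P c))
  /\
  (* for every Cov-morphism (F,f) there is a unique f.H making (f, f.H) a
     PCom-morphism, namely ind_hom f *)
  (forall (c c' : CovObj H) (F : Hom (cov_Y c) (cov_Y c'))
          (f : Hom (cov_X c) (cov_X c')),
     is_cov_hom c c' F f ->
     is_pcom_hom (ind_rho P c) (ind_pi P c) (ind_rho P c') (ind_pi P c')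
       f (ind_hom P c c' f)
     /\ (forall g : Hom (ind_XH P c) (ind_XH P c'),
           is_pcom_hom (ind_rho P c) (ind_pi P c) (ind_rho P c') (ind_pi P c') f g ->
           g = ind_hom P c c' f))
  /\
  (* functoriality: identities *)
  (forall c : CovObj H, ind_hom P c c (idm (cov_X c)) = idm (ind_XH P c))
  /\
  (* functoriality: composition *)
  (forall (c c' c'' : CovObj H)
          (F : Hom (cov_Y c) (cov_Y c')) (f : Hom (cov_X c) (cov_X c'))
          (F' : Hom (cov_Y c') (cov_Y c'')) (f' : Hom (cov_X c') (cov_X c'')),
     is_cov_hom c c' F f -> is_cov_hom c' c'' F' f' ->
     ind_hom P c c'' (comp f' f) = comp (ind_hom P c' c'' f') (ind_hom P c c' f)).
Proof.
  split; [|split; [|split]].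
  - intro c; apply ind_pi_epi.
  - intros c c' F f cov_Ff; split.
    + exact (ind_hom_pcom_hom P cov_Ff).
    + intros g pcom_g. exact (ind_pcom_hom_unique pcom_g (ind_hom_pcom_hom P cov_Ff)).
  - intro c.
    exact (ind_pcom_hom_unique (ind_hom_pcom_hom P (cov_hom_id c)) (pcom_hom_id _ _)).
  - intros c c' c'' F f F' f' cov_Ff cov_Ff'.
    apply (ind_pcom_hom_unique (ind_hom_pcom_hom P (cov_hom_comp cov_Ff cov_Ff'))).
    exact (pcom_hom_comp (ind_hom_pcom_hom P cov_Ff) (ind_hom_pcom_hom P cov_Ff')).
Qed.
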